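(* Let $D$ be a $3$-dicritical digraph, let $T$ be a subdigraph of $D$ that is a tournament, and let $S$ be a set of vertices of $T$ inducing a transitive tournament in $T$, with acyclic ordering $v_1,\dots,v_s$. Then for every $x\in V(T)\setminus S$ there is an increasing sequence of intervals $(I_1,I_2,I_3,I_4)$ of $S$ with $I_1\cup I_2\cup I_3\cup I_4=S$ such that, in $T$, $x$ dominates $I_1\cup I_3$ and $x$ is dominated by $I_2\cup I_4$.
   Context: A $2$-dicolouring is a map to $\{1,2\}$ whose colour classes induce acyclic subdigraphs. $D$ is $3$-dicritical if $D$ has no $2$-dicolouring but every proper subdigraph has one. A tournament has exactly one arc between any two distinct vertices; it is transitive if acyclic, and then its acyclic ordering $v_1,\dots,v_s$ is the unique ordering with every arc $v_iv_j$ satisfying $i<j$. An interval of $S$ is a set $\{v_i,\dots,v_j\}$ for $i,j\in[s]$ (possibly empty). An interval $\{v_{i_0},\dots,v_{j_0}\}$ is smaller than $\{v_{i_1},\dots,v_{j_1}\}$ if $j_0<i_1$; by convention the empty interval is both smaller and greater than every interval. A sequence $P_1,\dots,P_t$ of intervals is increasing if $P_i$ is smaller than $P_j$ whenever $i<j$. A vertex $x$ dominates a set $Y$ (and $Y$ is dominated by $x$) if $xy$ is an arc for every $y\in Y$. *)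

From mathcomp Require Import all_boot.
Set Implicit Arguments. Unset Strict Implicit. Unset Printing Implicit Defensive.

Section Digraphs.
Variable V : finType.

Definition acyclic_on (Y : {set V}) (B : rel V) : Prop :=
  forall p : seq V, p != [::] -> all (fun v => v \in Y) p -> ~~ cycle B p.

Definition subdigraph (A : rel V) (X : {set V}) (B : rel V) : Prop :=
  forall x y, B x y -> [&& x \in X, y \in X & A x y].

Definition proper_subdigraph (A : rel V) (X : {set V}) (B : rel V) : Prop :=
  subdigraph A X B /\ (X != setT \/ exists x y, A x y && ~~ B x y).

Definition dicolouring2 (X : {set V}) (B : rel V) (c : V -> bool) : Prop :=
  forall b : bool, acyclic_on [set v in X | c v == b] B.

Definition dicolourable2 (X : {set V}) (B : rel V) : Prop :=
  exists c : V -> bool, dicolouring2 X B c.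

Definition dicritical3 (A : rel V) : Prop :=
  [/\ irreflexive A, ~ dicolourable2 setT A &
      forall X B, proper_subdigraph A X B -> dicolourable2 X B].

Definition is_tournament (X : {set V}) (B : rel V) : Prop :=
  (forall x y, B x y -> (x \in X) && (y \in X)) /\ irreflexive B /\
  forall x y, x \in X -> y \in X -> x != y -> (B x y) (+) (B y x).

(* s lists a set S of vertices of T = (X, B) that induces a transitive
   tournament, and s is its acyclic ordering (every arc goes forward). *)
Definition transitive_ordering (X : {set V}) (B : rel V) (s : seq V) : Prop :=
  [/\ uniq s, {subset s <= X}, acyclic_on [set v in s] B &
      forall y z, y \in s -> z \in s -> B y z -> index y s < index z s].

(* Intervals of S w.r.t. the ordering s (0-based indices; empty if i > j). *)
Definition is_interval (s : seq V) (I : {set V}) : Prop :=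
  exists i j : nat, I = [set v in s | i <= index v s <= j].

(* I smaller than J (empty interval is smaller and greater than all). *)
Definition smaller (s : seq V) (I J : {set V}) : bool :=
  [|| I == set0, J == set0 |
      [forall y in I, forall z in J, index y s < index z s]].

Definition increasing_intervals (s : seq V) (P : seq {set V}) : Prop :=
  (forall I, I \in P -> is_interval s I) /\
  forall i j, i < j -> j < size P -> smaller s (nth set0 P i) (nth set0 P j).

End Digraphs.

From mathcomp Require Import all_boot zify.
Set Implicit Arguments. Unset Strict Implicit. Unset Printing Implicit Defensive.

(* If, along the acyclic ordering of S, x were dominated by v_i, dominated v_j,
   were dominated by v_k and dominated v_l (i < j < k < l), then x v_j v_k would
   be a directed triangle all of whose vertices are out-neighbours of v_i and
   in-neighbours of v_l, and v_i v_l is an arc. A 3-dicritical digraph has no such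
   configuration: 2-dicolour D minus the arc v_i v_l; some vertex u of the triangle
   gets the colour of v_i, and replacing v_i v_l by v_i u v_l in a monochromatic
   closed walk shows that the colouring is a 2-dicolouring of D. So the vertices
   of S dominated by x and those dominating x form at most four alternating
   blocks of the ordering, which are the required intervals. *)

Section Detour.
Variables (T : eqType) (a d v : T).

Fixpoint detour (x : T) (s : seq T) : seq T :=
  if s is y :: s' then
    (if (x == a) && (y == d) then [:: v; y] else [:: y]) ++ detour y s'
  else [::].

Lemma last_detour s x : last x (detour x s) = last x s.
Proof. by elim: s x => [|y s IHs] x //=; rewrite last_cat; case: ifP. Qed.

Lemma detour_nil s x : (detour x s == [::]) = (s == [::]).
Proof. by case: s => [|y s] //=; case: ifP. Qed.

Lemma all_detour (Y : pred T) : (Y a -> Y v) ->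
  forall s x, Y x -> all Y s -> all Y (detour x s).
Proof.
move=> Yv; elim=> [|y s IHs] x //= Yx /andP[Yy Ys]; rewrite all_cat IHs // andbT.
by case: ifP => [/andP[/eqP xa _]|_] /=; rewrite Yy ?Yv -?xa.
Qed.

Lemma detour_path (R R' : rel T) :
  (forall u w, R u w -> R' u w || (u == a) && (w == d)) -> R' a v -> R' v d ->
  forall s x, path R x s -> path R' x (detour x s).
Proof.
move=> RR' R'av R'vd; elim=> [|y s IHs] x //= /andP[Rxy Rs].
case: ifP => [/andP[/eqP xa /eqP yd]|xy] /=; rewrite IHs // andbT.
  by rewrite xa yd R'av R'vd.
by have /orP[-> //|] := RR' _ _ Rxy; rewrite xy.
Qed.

End Detour.

Lemma acyclic_on_detour (V : finType) (Y : {set V}) (R R' : rel V) a d v :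
  (forall u w, R u w -> R' u w || (u == a) && (w == d)) -> R' a v -> R' v d ->
  (a \in Y -> v \in Y) -> acyclic_on Y R' -> acyclic_on Y R.
Proof.
move=> RR' R'av R'vd Yv acycR' [|x p] // _ /= /andP[Yx Yp]; apply/negP => cycR.
have [q walkE] : exists q, detour a d v x (rcons p x) = rcons q x.
  have := last_detour a d v (rcons p x) x; have := detour_nil a d v (rcons p x) x.
  case/lastP: (detour _ _ _ _ _) => [|q z]; first by rewrite eqxx -size_eq0 size_rcons.
  by rewrite !last_rcons => _ ->; exists q.
have := detour_path RR' R'av R'vd cycR; rewrite walkE => walk.
have : all (fun u => u \in Y) (detour a d v x (rcons p x)).
  by apply: all_detour => //; rewrite all_rcons Yx.
rewrite walkE all_rcons => /andP[_ Yq].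
by move: (acycR' (x :: q) isT); rewrite /= Yx Yq walk => /(_ isT).
Qed.

Lemma dicritical3_cycle_between (V : finType) (A : rel V) a d (t : seq V) :
  dicritical3 A -> A a d -> t != [::] -> {in t, forall u, A a u && A u d} ->
  ~~ cycle A t.
Proof.
case=> irrA not_col crit Aad t_n0 between; apply/negP => cycAt.
pose A' := [rel u w | A u w && ((u, w) != (a, d))].
have A'_out u w : A u w -> u != a -> A' u w.
  by move=> Auw ua; rewrite /= Auw xpair_eqE negb_and ua.
have A'_in u w : A u w -> w != d -> A' u w.
  by move=> Auw wd; rewrite /= Auw xpair_eqE negb_and wd orbT.
have neq_of_arc u w : A u w -> u != w by apply: contraTneq => ->; rewrite irrA.
have [phi colphi] : dicolourable2 setT A'.
  apply: crit; split; first by move=> u w /andP[Auw _]; rewrite !inE.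
  by right; exists a, d; rewrite /= Aad eqxx.
have [u ut phiu] : exists2 u, u \in t & phi u = phi a.
  suff /hasP[u ut /eqP phiu] : has (fun u => phi u == phi a) t by exists u.
  apply/negPn/negP => /hasPn no_col.
  have cycA't : cycle A' t.
    apply: (@sub_in_cycle _ [pred u | u \in t] _ _ _ _ _ cycAt); last exact/allP.
    move=> u w ut _ Auw; apply: A'_out Auw _.
    by rewrite eq_sym; apply: neq_of_arc; case/andP: (between u ut).
  have col_t : all (fun u => u \in [set v in [set: V] | phi v == ~~ phi a]) t.
    apply/allP => u /no_col; rewrite !inE.
    by case: (phi u) (phi a) => [] [].
  by move: (colphi (~~ phi a) t t_n0 col_t); rewrite cycA't.
have /andP[Aau Aud] := between u ut.
apply: not_col; exists phi => k.
apply: (acyclic_on_detour (R' := A') _ (A'_in _ _ Aau _) (A'_out _ _ Aud _)).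
- move=> w z Awz; rewrite /= Awz xpair_eqE.
  by case: (_ == _) (_ == _) => [] [].
- exact: neq_of_arc Aud.
- by rewrite eq_sym; apply: neq_of_arc Aau.
- by rewrite !inE phiu.
- exact: colphi.
Qed.

Lemma first_hit (P : pred nat) m n : m <= n ->
  exists k, [/\ m <= k <= n, forall i, m <= i < k -> ~~ P i & k < n -> P k].
Proof.
move=> mn; have [l ->] : exists l, n = m + l by exists (n - m); lia.
elim: l m {mn} => [|l IHl] m.
  by exists m; rewrite addn0 ltnn leqnn; split=> // i; lia.
case Pm: (P m).
  by exists m; split=> [||_] //; [lia | move=> i; lia].
have [k [mk kbef kP]] := IHl m.+1; exists k; rewrite addnS -addSn; split=> //; first lia.
move=> i /andP[mi ik]; have [<-|mi'] := eqVneq m i; first by rewrite Pm.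
by apply: kbef; lia.
Qed.

Lemma four_blocks (P : pred nat) n :
  (forall i j k l, i < j -> j < k -> k < l -> l < n ->
     ~~ P i -> P j -> ~~ P k -> P l -> False) ->
  exists p1 p2 p3, [/\ p1 <= p2 <= p3, p3 <= n &
    forall i, i < n -> P i = (i < p1) || (p2 <= i < p3)].
Proof.
move=> no_alt.
have [p1 [/andP[_ p1n] bef1 at1]] := first_hit (predC P) (leq0n n).
have [p2 [/andP[p12 p2n] bef2 at2]] := first_hit P p1n.
have [p3 [/andP[p23 p3n] bef3 at3]] := first_hit (predC P) p2n.
have after3 i : p3 <= i < n -> ~~ P i.
  move=> /andP[p3i ilt]; apply/negP => Pi.
  have nP1 : ~~ P p1 by apply: at1; lia.
  have P2 : P p2 by apply: at2; lia.
  have nP3 : ~~ P p3 by apply: at3; lia.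
  apply: (no_alt p1 p2 p3 i) => //.
  - by rewrite ltn_neqAle p12 andbT; apply: contraNneq nP1 => ->.
  - by rewrite ltn_neqAle p23 andbT; apply: contraNneq nP3 => <-.
  - by rewrite ltn_neqAle p3i andbT; apply: contraNneq nP3 => ->.
exists p1, p2, p3; split=> [||i ilt]; rewrite ?p12 ?p23 //.
case: (ltnP i p1) => [ip1|p1i] /=; first by apply/negPn/bef1; lia.
case: (ltnP i p2) => [ip2|p2i] /=; first by apply/negbTE/bef2; lia.
case: (ltnP i p3) => [ip3|p3i] /=; first by apply/negPn/bef3; lia.
by apply/negbTE/after3; lia.
Qed.

Lemma subdigraph_cycle_between (V : finType) (A : rel V) (X : {set V}) (B : rel V)
    a d (t : seq V) :
  dicritical3 A -> subdigraph A X B -> B a d -> t != [::] ->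
  {in t, forall u, B a u && B u d} -> ~~ cycle B t.
Proof.
move=> crit subB Bad t_n0 between; have BA : subrel B A by move=> u w /subB/and3P[].
apply: (contra (@sub_cycle _ _ _ BA t)).
apply: dicritical3_cycle_between crit (BA _ _ Bad) t_n0 _.
by move=> u /between/andP[Bau Bud]; rewrite !BA.
Qed.

Section Slices.
Variables (V : finType) (s : seq V).

Definition slice (m n : nat) : {set V} := [set v in s | m <= index v s < n].

Lemma slice_interval m n : is_interval s (slice m n).
Proof.
case: n => [|n]; last by exists m, n; apply/setP => v; rewrite !inE.
by exists 1, 0; apply/setP => v; rewrite !inE ltn0 andbF; case: (index v s).
Qed.

Lemma smaller_slice m n m' n' : n <= m' -> smaller s (slice m n) (slice m' n').
Proof.
move=> nm'; apply/or3P/Or33/forall_inP => y; rewrite inE => /and3P[_ _ yn].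
by apply/forall_inP => z; rewrite inE => /and3P[_ m'z _]; lia.
Qed.

Lemma increasing_slices4 p1 p2 p3 n : p1 <= p2 <= p3 ->
  increasing_intervals s [:: slice 0 p1; slice p1 p2; slice p2 p3; slice p3 n].
Proof.
move=> /andP[p12 p23]; split.
  by move=> I; rewrite !inE => /or4P[] /eqP->; apply: slice_interval.
move=> i j ij; case: j ij => [|[|[|[|j]]]] //; case: i => [|[|[|i]]] //= _ _;
  apply: smaller_slice; lia.
Qed.

Lemma cover_slices4 p1 p2 p3 : p1 <= p2 <= p3 -> p3 <= size s ->
  slice 0 p1 :|: slice p1 p2 :|: slice p2 p3 :|: slice p3 (size s) = [set v in s].
Proof.
move=> /andP[p12 p23] p3n; apply/setP => v; rewrite !inE.
rewrite -!andb_orr -[RHS]andbT; apply: andb_id2l => vs.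
by have := index_mem v s; rewrite vs leq0n /=; lia.
Qed.

End Slices.

Lemma tournament_arcN (V : finType) (X : {set V}) (B : rel V) x y :
  is_tournament X B -> x \in X -> y \in X -> x != y -> ~~ B x y -> B y x.
Proof. by case=> _ [_ tour] xX yX /(tour x y xX yX); case: (B x y). Qed.

Lemma transitive_ordering_arc (V : finType) (X : {set V}) (B : rel V) s x0 i j :
  is_tournament X B -> transitive_ordering X B s -> i < j < size s ->
  B (nth x0 s i) (nth x0 s j).
Proof.
move=> tourB [uniq_s sub_s _ forward] /andP[ij js].
have ilt : i < size s by apply: ltn_trans js.
have [si sj] := (mem_nth x0 ilt, mem_nth x0 js).
apply/negPn/negP => /(tournament_arcN tourB (sub_s _ si) (sub_s _ sj)).
rewrite nth_uniq // (ltn_eqF ij) => /(_ isT) /(forward _ _ sj si).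
by rewrite !index_uniq // ltnNge (ltnW ij).
Qed.

Lemma dicritical3_no_alternation (V : finType) (A : rel V) (X : {set V}) (B : rel V)
    (s : seq V) x :
  dicritical3 A -> subdigraph A X B -> is_tournament X B ->
  transitive_ordering X B s -> x \in X -> x \notin s ->
  forall i j k l, i < j -> j < k -> k < l -> l < size s ->
    ~~ B x (nth x s i) -> B x (nth x s j) -> ~~ B x (nth x s k) -> B x (nth x s l) ->
  False.
Proof.
move=> crit subB tourB ordS xX xs i j k l ij jk kl ls nBxi Bxj nBxk Bxl.
pose sn n := nth x s n.
have forward m n : m < n < size s -> B (sn m) (sn n) :=
  transitive_ordering_arc x tourB ordS.
have backward n : n < size s -> ~~ B x (sn n) -> B (sn n) x.
  case: ordS => _ sub_s _ _ ns; have sn_in := mem_nth x ns.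
  by apply: tournament_arcN tourB xX (sub_s _ sn_in) _; apply: contraNneq xs => ->.
have Bix : B (sn i) x by apply: backward nBxi; lia.
have Bkx : B (sn k) x by apply: backward nBxk; lia.
have between : {in [:: x; sn j; sn k], forall u, B (sn i) u && B u (sn l)}.
  by move=> u; rewrite !inE => /or3P[] /eqP->; rewrite ?Bix ?Bxl ?Bkx ?forward //=; lia.
have := subdigraph_cycle_between (t := [:: x; sn j; sn k]) crit subB
  (forward i l _) isT between.
by rewrite /= Bxj Bkx forward //=; lia.
Qed.

Theorem lemma16 (V : finType) (A : rel V) (X : {set V}) (B : rel V)
    (s : seq V) (x : V) :
  dicritical3 A -> subdigraph A X B -> is_tournament X B ->
  transitive_ordering X B s -> x \in X -> x \notin s ->
  exists I1 I2 I3 I4 : {set V},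
    [/\ increasing_intervals s [:: I1; I2; I3; I4],
        I1 :|: I2 :|: I3 :|: I4 = [set v in s],
        {in I1 :|: I3, forall y, B x y} &
        {in I2 :|: I4, forall y, B y x}].
Proof.
move=> crit subB tourB ordS xX xs; have [_ sub_s _ _] := ordS.
have [p1 [p2 [p3 [p123 p3n blocks]]]] := four_blocks (P := fun i => B x (nth x s i))
  (dicritical3_no_alternation crit subB tourB ordS xX xs).
have in_slice y m n : y \in slice s m n ->
    [/\ y \in s, m <= index y s < n & B x y = (index y s < p1) || (p2 <= index y s < p3)].
  rewrite inE => /andP[ys bounds]; split=> //.
  by rewrite -{1}(nth_index x ys) blocks ?index_mem.
exists (slice s 0 p1), (slice s p1 p2), (slice s p2 p3), (slice s p3 (size s)).
split; [exact: increasing_slices4 | exact: cover_slices4 | |].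
- by move=> y /setUP[] /in_slice[_ bounds ->]; lia.
- move=> y /setUP[] /in_slice[ys bounds Bxy].
  all: apply: tournament_arcN tourB xX (sub_s _ ys) _ _.
  all: by [apply: contraNneq xs => -> | rewrite Bxy; lia].
Qed.
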